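(* Let $(X,d,\kappa)$ be a complete digital metric space where $d$ is an $\ell_p$ metric for some $1\le p\le\infty$, and let $S,T:X\to X$ be commuting maps ($S\circ T=T\circ S$) with $S(X)\subset T(X)$. If there exist $\alpha\in(0,1)$ and a positive integer $k$ such that $d(S^k(x),S^k(y))\le\alpha\, d(T(x),T(y))$ for all $x,y\in X$, then $S$ and $T$ have a common fixed point.
   Context: A digital metric space is a triple $(X,d,\kappa)$ where $X\subset\mathbb{Z}^n$ for some positive integer $n$, $\kappa$ is an adjacency relation on $X$, and $d$ is a metric on $X$. The $\ell_p$ metric on $\mathbb{Z}^n$ is $d(x,y)=(\sum_i|x_i-y_i|^p)^{1/p}$ for $1\le p<\infty$ and $\max_i|x_i-y_i|$ for $p=\infty$. $S^k$ denotes the $k$-fold composition of $S$. *)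

From HB Require Import structures.
From mathcomp Require Import all_boot all_order all_algebra.
From mathcomp Require Import all_classical all_reals all_analysis.
Set Implicit Arguments. Unset Strict Implicit. Unset Printing Implicit Defensive.
Import Order.TTheory GRing.Theory Num.Theory.
Local Open Scope ring_scope.
Local Open Scope classical_set_scope.

Inductive lp_exp (R : realType) := LpFin of R | LpInf.
Arguments LpInf {R}.

Definition lp_exp_ok (R : realType) (p : lp_exp R) : Prop :=
  match p with LpFin q => 1 <= q | LpInf => True end.

Definition lp_dist (R : realType) (n : nat) (p : lp_exp R)
    (x y : 'rV[int]_n) : R :=
  match p with
  | LpFin q => powR (\sum_(i < n) powR (`|x ord0 i - y ord0 i|%:~R) q) q^-1
  | LpInf => \big[Num.max/0]_(i < n) (`|x ord0 i - y ord0 i|%:~R)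
  end.

Definition d_cauchy (T : Type) (R : realType) (d : T -> T -> R)
    (u : nat -> T) : Prop :=
  forall e : R, 0 < e -> exists N : nat,
    forall m k : nat, (N <= m)%N -> (N <= k)%N -> d (u m) (u k) < e.

Definition d_converges (T : Type) (R : realType) (d : T -> T -> R)
    (u : nat -> T) (l : T) : Prop :=
  forall e : R, 0 < e -> exists N : nat, forall m : nat, (N <= m)%N -> d (u m) l < e.

Definition d_complete (T : Type) (R : realType) (X : set T) (d : T -> T -> R) : Prop :=
  forall u : nat -> T, (forall m, X (u m)) -> d_cauchy d u ->
    exists2 l, X l & d_converges d u l.

(** An l_p distance between distinct points of Z^n is at least 1, so the
    metric is uniformly discrete.  Choosing T-preimages of S^k-images gives
    Jungck's sequence T(u_(m+1)) = S^k(u_m), whose consecutive distances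
    decay like alpha^m; once they drop below 1 the sequence is stationary and
    yields a coincidence point T v = S^k v.  Then w = S^k v is a common fixed
    point of T and S^k, and the contraction makes such points unique; since
    S w is another one, S w = w. *)

From HB Require Import structures.
From mathcomp Require Import all_boot all_order all_algebra.
From mathcomp Require Import all_classical all_reals all_analysis.
Import Order.TTheory GRing.Theory Num.Theory.
Local Open Scope ring_scope.
Local Open Scope classical_set_scope.

Section LpDistance.
Context {R : realType} {n : nat} {p : lp_exp R}.

Hypothesis p_ok : lp_exp_ok p.

Lemma lp_dist_ge1 (x y : 'rV[int]_n) : x != y -> 1 <= lp_dist p x y.
Proof.
move=> /eqP x_neq_y.
have [i xy_i] : exists i, x ord0 i != y ord0 i.
  apply/existsP; apply: contra_notT x_neq_y => /existsPn xy.
  by apply/rowP => i; apply/eqP; move: (xy i); rewrite negbK.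
have dist_i : (1 : R) <= `|x ord0 i - y ord0 i|%:~R.
  by rewrite ler1z -gtz0_ge1 normr_gt0 subr_eq0.
case: p p_ok => [q|] /= q_ge1; last first.
  by rewrite (bigD1 i) //= (le_trans dist_i) // le_max lexx.
have powR_ge1 (a r : R) : 1 <= a -> 0 <= r -> 1 <= a `^ r.
  move=> a_ge1 r_ge0; have -> : (1 : R) = 1 `^ r by rewrite powR1.
  by rewrite ge0_ler_powR // nnegrE // (le_trans ler01 a_ge1).
apply: (powR_ge1); last by rewrite invr_ge0 (le_trans ler01 q_ge1).
rewrite (bigD1 i) //= (le_trans (powR_ge1 _ _ dist_i (le_trans ler01 q_ge1))) //.
by rewrite lerDl sumr_ge0 // => j _; exact: powR_ge0.
Qed.

Lemma lp_dist_lt1_eq (x y : 'rV[int]_n) : lp_dist p x y < 1 -> x = y.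
Proof. by apply: contraTeq => /lp_dist_ge1; rewrite leNgt. Qed.

End LpDistance.

Lemma exists_expr_mulr_lt {R : realType} (a D e : R) :
  0 <= a -> a < 1 -> 0 < e -> exists N : nat, a ^+ N * D < e.
Proof.
move=> a_ge0 a_lt1 e_gt0.
have : (fun N => a ^+ N * D) @ \oo --> 0.
  by rewrite -(mul0r D); apply: cvgMl; apply: cvg_expr; rewrite ger0_norm.
move=> /cvgr_lt /(_ e e_gt0) [N _ HN]; exists N; exact: HN N (leqnn N).
Qed.

Section DiscreteJungck.
Set Implicit Arguments.
Context {V : Type} {R : realType} {d : V -> V -> R} {X : set V}.
Hypothesis d_lt1_eq : forall x y, d x y < 1 -> x = y.

Context {S T : V -> V} {alpha : R} {k : nat}.
Hypothesis XS : forall x, X x -> X (S x).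
Hypothesis commute_ST : forall x, X x -> S (T x) = T (S x).
Hypothesis SX_sub_TX : S @` X `<=` T @` X.
Hypotheses (alpha_ge0 : 0 <= alpha) (alpha_lt1 : alpha < 1) (k_gt0 : (0 < k)%N).
Hypothesis contraction : forall x y, X x -> X y ->
  d (iter k S x) (iter k S y) <= alpha * d (T x) (T y).

Lemma iter_S_in m x : X x -> X (iter m S x).
Proof. by move=> Xx; elim: m => //= m; apply: XS. Qed.

Lemma T_iter_S m x : X x -> T (iter m S x) = iter m S (T x).
Proof.
by move=> Xx; elim: m => //= m IHm; rewrite -IHm commute_ST //; exact: iter_S_in.
Qed.

Lemma dist_le_contraction_eq x y : d x y <= alpha * d x y -> x = y.
Proof.
move=> le_dxy; apply: d_lt1_eq; apply: le_lt_trans ltr01.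
have : (1 - alpha) * d x y <= 0 by rewrite mulrBl mul1r subr_le0.
by rewrite pmulr_rle0 // subr_gt0.
Qed.

Lemma iter_S_in_T_image x : X x -> exists2 y, X y & T y = iter k S x.
Proof.
move=> Xx; have [y Xy Ty] : (T @` X) (iter k S x).
  apply: SX_sub_TX; exists (iter k.-1 S x); first exact: iter_S_in.
  by rewrite -iterS prednK.
by exists y.
Qed.

Lemma coincidence_point : X !=set0 -> exists2 v, X v & T v = iter k S v.
Proof.
move=> [x0 Xx0].
have [g gP] : {g : V -> V & forall x, X x -> X (g x) /\ T (g x) = iter k S x}.
  apply: (@choice _ _ (fun x y => X x -> X y /\ T y = iter k S x)) => x.
  have [Xx|] := pselect (X x); last by exists x.
  by have [y Xy Ty] := iter_S_in_T_image Xx; exists y.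
pose u m := iter m g x0.
have Xu m : X (u m) by elim: m => //= m Xum; case: (gP _ Xum).
have Tu m : T (u m.+1) = iter k S (u m) by case: (gP _ (Xu m)).
pose D m := d (T (u m)) (T (u m.+1)).
have D_decay m : D m <= alpha ^+ m * D 0%N.
  elim: m => [|m IHm]; first by rewrite expr0 mul1r.
  rewrite /D !Tu exprS -mulrA (le_trans (contraction (Xu _) (Xu _))) //.
  by apply: ler_wpM2l; move: IHm; rewrite /D !Tu.
have [N DN_lt1] := exists_expr_mulr_lt _ (D 0%N) _ alpha_ge0 alpha_lt1 ltr01.
exists (u N) => //; rewrite -Tu; apply: d_lt1_eq.
exact: le_lt_trans (D_decay N) DN_lt1.
Qed.

Lemma common_fixed_point_uniq a b : X a -> X b ->
  iter k S a = a -> T a = a -> iter k S b = b -> T b = b -> a = b.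
Proof.
move=> Xa Xb Ska Ta Skb Tb; apply: dist_le_contraction_eq.
by have := contraction Xa Xb; rewrite Ska Skb Ta Tb.
Qed.

Lemma common_fixed_point_of_coincidence v : X v -> T v = iter k S v ->
  iter k S (iter k S v) = iter k S v /\ T (iter k S v) = iter k S v.
Proof.
move=> Xv Tv; set w := iter k S v.
have Xw : X w by exact: iter_S_in.
have Tw : T w = iter k S w by rewrite /w T_iter_S // Tv.
have Skw : iter k S w = w.
  apply: dist_le_contraction_eq.
  by have := contraction Xw Xv; rewrite Tw Tv.
by rewrite Tw Skw.
Qed.

Theorem discrete_jungck_common_fixed_point :
  X !=set0 -> exists2 x, X x & S x = x /\ T x = x.
Proof.
move=> /coincidence_point [v Xv Tv].
have [Skw Tw] := common_fixed_point_of_coincidence Xv Tv.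
set w := iter k S v in Skw Tw *.
have Xw : X w by exact: iter_S_in.
have XSw : X (S w) by exact: XS.
exists w => //; split=> //; apply: common_fixed_point_uniq => //.
- by rewrite -iterSr iterS Skw.
- by rewrite -commute_ST // Tw.
Qed.

End DiscreteJungck.

Theorem corollary5p4 (R : realType) (n : nat) (X : set 'rV[int]_n)
  (kappa : 'rV[int]_n -> 'rV[int]_n -> Prop) (p : lp_exp R)
  (S T : 'rV[int]_n -> 'rV[int]_n) (alpha : R) (k : nat) :
  X !=set0 ->
  lp_exp_ok p ->
  d_complete X (lp_dist p) ->
  (forall x, X x -> X (S x)) ->
  (forall x, X x -> X (T x)) ->
  (forall x, X x -> S (T x) = T (S x)) ->
  S @` X `<=` T @` X ->
  0 < alpha -> alpha < 1 -> (0 < k)%N ->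
  (forall x y, X x -> X y ->
     lp_dist p (iter k S x) (iter k S y) <= alpha * lp_dist p (T x) (T y)) ->
  exists2 x, X x & S x = x /\ T x = x.
Proof.
move=> X_neq0 p_ok _ XS _ commute_ST SX_sub_TX alpha_gt0 alpha_lt1 k_gt0 contraction.
exact: (discrete_jungck_common_fixed_point (lp_dist_lt1_eq p_ok)
  XS commute_ST SX_sub_TX (ltW alpha_gt0) alpha_lt1 k_gt0 contraction X_neq0).
Qed.
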